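(* Consider a Why Query with the \texttt{SUM} aggregate, an attribute $X$ with filters $p_1,\dots,p_m$, a threshold $\varepsilon$, a conciseness parameter $\sigma>0$, and a canonical predicate $P^C$. Then there exists an optimal explanation $P^*$ (a maximizer of $\rho_P-\sigma|P|$ over all $P\subseteq\{p_1,\dots,p_m\}$) with $P^*\subseteq P^C$.
   Context: $D$ is a finite table of rows; $M$ is a numerical column; $s_1,s_2$ are disjoint sets of rows (sibling subspaces). $X$ is a categorical column with values $x_1,\dots,x_m$; filter $p_i$ is the condition $X=x_i$. A predicate is $P\subseteq\{p_1,\dots,p_m\}$, $D_P$ the set of rows whose $X$-value is in $P$, $|P|$ its number of filters; $D'-D''$ is set difference. For $D'\subseteq D$, $\Delta(D')=\sum_{t\in D'\cap s_1}t[M]-\sum_{t\in D'\cap s_2}t[M]$; $\Delta_i=\Delta(D_{p_i})$; it is assumed $\Delta(D)>0$. $P$ is an actual cause if there is $\Gamma\subseteq\{p_1,\dots,p_m\}$, $\Gamma\cap P=\emptyset$ (valid contingency), with $\Delta(D-D_\Gamma-D_P)\le\varepsilon<\Delta(D-D_\Gamma)$. For an actual cause, $\rho_P=\frac{1}{1+\min_\Gamma|\Gamma|_W}$ over valid contingencies, with $|\Gamma|_W=\max\left(\frac{\Delta(D-D_P)-\Delta(D-D_P-D_\Gamma)}{\Delta(D)},0\right)$; otherwise $\rho_P=0$. Canonical predicate: order the filters so that $\Delta_1\ge\cdots\ge\Delta_m$ and let $j$ be such that $\Delta(D)-\sum_{i=1}^{j}\Delta_i\le\varepsilon<\Delta(D)-\sum_{i=1}^{j-1}\Delta_i$;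 then $P^C=\{p_1,\dots,p_j\}$. *)

From HB Require Import structures.
From mathcomp Require Import all_boot all_order all_algebra.
From mathcomp Require Import fingroup perm.
Set Implicit Arguments. Unset Strict Implicit. Unset Printing Implicit Defensive.
Import Order.TTheory GRing.Theory Num.Theory.
Local Open Scope ring_scope.

Section WhyQuery.
(* R : numbers; T : the (finite) set of rows of the table D;
   M : the numerical column; s1 s2 : sibling subspaces;
   m : number of values of the categorical column X, whose values are
   indexed by 'I_m (filter p_i is X = x_i, identified with i). *)
Variables (R : realFieldType) (T : finType) (m : nat).
Variables (M : T -> R) (s1 s2 : {set T}) (X : T -> 'I_m).

Definition DP (P : {set 'I_m}) : {set T} := [set t | X t \in P].

Definition Delta (D' : {set T}) : R :=
  \sum_(t in D' :&: s1) M t - \sum_(t in D' :&: s2) M t.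

Definition Delta_i (i : 'I_m) : R := Delta (DP [set i]).

Definition DD : {set T} := [set: T].

Definition valid_contingency (eps : R) (P G : {set 'I_m}) : bool :=
  [&& [disjoint G & P],
      Delta (DD :\: DP G :\: DP P) <= eps &
      eps < Delta (DD :\: DP G)].

Definition actual_cause (eps : R) (P : {set 'I_m}) : bool :=
  [exists G, valid_contingency eps P G].

Definition weight (P G : {set 'I_m}) : R :=
  Order.max ((Delta (DD :\: DP P) - Delta (DD :\: DP P :\: DP G)) / Delta DD) 0.

Definition rho (eps : R) (P : {set 'I_m}) : R :=
  match [pick G | valid_contingency eps P G] with
  | Some G0 =>
      1 / (1 + \big[Order.min/weight P G0]_(G | valid_contingency eps P G)
                 weight P G)
  | None => 0
  end.

Definition canonical_predicate (eps : R) (PC : {set 'I_m}) : Prop :=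
  exists (ord : {perm 'I_m}) (j : nat),
    [/\ forall a b : 'I_m, (a <= b)%N -> Delta_i (ord b) <= Delta_i (ord a),
        (0 < j <= m)%N,
        Delta DD - \sum_(i < m | (i < j)%N) Delta_i (ord i) <= eps,
        eps < Delta DD - \sum_(i < m | (i < j.-1)%N) Delta_i (ord i) &
        PC = [set ord i | i : 'I_m & (i < j)%N]].

Definition objective (eps sigma : R) (P : {set 'I_m}) : R :=
  rho eps P - sigma * #|P|%:R.

End WhyQuery.

From Pilot Require Import Defs.
From HB Require Import structures.
From mathcomp Require Import all_boot all_order all_algebra.
From mathcomp Require Import fingroup perm lra.
Set Implicit Arguments.
Unset Strict Implicit.
Unset Printing Implicit Defensive.
Import Order.TTheory GRing.Theory Num.Theory.
Local Open Scope ring_scope.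

(* Write Delta_sum S for the sum of the Delta_i over i in S, so that
   Delta(D - D_S) = Delta(D) - Delta_sum S and a contingency G of P weighs
   max (Delta_sum G / Delta(D)) 0.  Exchanging a filter b of P outside P^C
   for a filter a of P^C outside P, where Delta_b <= Delta_a by the sorting,
   keeps |P| and cannot lower rho: each contingency of P yields one of the
   new predicate with no larger weight.  A predicate containing P^C is
   dominated by P^C, which is a cause with the empty contingency, so that
   rho_{P^C} = 1.  Exchanging from a maximiser of rho_P - sigma |P| therefore
   ends in a maximiser inside P^C. *)

Section WhyQuery.
Variables (R : realFieldType) (T : finType) (m : nat).
Variables (M : T -> R) (s1 s2 : {set T}) (X : T -> 'I_m).

Local Notation Delta := (Delta M s1 s2).
Local Notation Delta_i := (Delta_i M s1 s2 X).
Local Notation DP := (DP X).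

Definition Delta_sum (S : {set 'I_m}) : R := \sum_(i in S) Delta_i i.

Lemma DeltaE (A : {set T}) :
  Delta A = \sum_(t in A) (M t *+ (t \in s1) - M t *+ (t \in s2)).
Proof.
rewrite /Defs.Delta sumrB.
by congr (_ - _); under [RHS]eq_bigr do rewrite mulrb;
  rewrite -big_mkcondr; apply: eq_bigl => t; rewrite inE.
Qed.

Lemma Delta_setD (A B : {set T}) : Delta (A :\: B) = Delta A - Delta (A :&: B).
Proof. by rewrite !DeltaE [in RHS](big_setID B) /= addrAC subrr add0r. Qed.

Lemma Delta_sum_set0 : Delta_sum set0 = 0.
Proof. exact: big_set0. Qed.

Lemma Delta_sum_setU1 x (S : {set 'I_m}) :
  x \notin S -> Delta_sum (x |: S) = Delta_i x + Delta_sum S.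
Proof. exact: big_setU1. Qed.

Lemma Delta_sum_setD1 x (S : {set 'I_m}) :
  x \in S -> Delta_sum S = Delta_i x + Delta_sum (S :\ x).
Proof. exact: big_setD1. Qed.

Lemma Delta_DP (S : {set 'I_m}) : Delta (DP S) = Delta_sum S.
Proof.
rewrite DeltaE (partition_big X (mem S)) => [|t]; last by rewrite inE.
apply: eq_bigr => i iS; rewrite /Defs.Delta_i DeltaE; apply: eq_bigl => t.
by rewrite !inE; case: eqP => [->|]; rewrite ?andbT ?andbF.
Qed.

Lemma Delta_setD_DP (S : {set 'I_m}) :
  Delta (DD T :\: DP S) = Delta (DD T) - Delta_sum S.
Proof. by rewrite Delta_setD setTI Delta_DP. Qed.

Lemma DP_setU (A B : {set 'I_m}) : DP (A :|: B) = DP A :|: DP B.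
Proof. by apply/setP => t; rewrite !inE. Qed.

Lemma Delta_sum_setU (A B : {set 'I_m}) :
  [disjoint A & B] -> Delta_sum (A :|: B) = Delta_sum A + Delta_sum B.
Proof.
by move=> AB; rewrite /Delta_sum -bigU //; apply: eq_bigl => i; rewrite !inE.
Qed.

Lemma valid_contingencyE eps (P G : {set 'I_m}) :
  valid_contingency M s1 s2 X eps P G =
  [&& [disjoint G & P], Delta (DD T) - Delta_sum (G :|: P) <= eps
    & eps < Delta (DD T) - Delta_sum G].
Proof. by rewrite /valid_contingency setDDl -DP_setU !Delta_setD_DP. Qed.

Lemma weightE (P G : {set 'I_m}) : [disjoint G & P] ->
  weight M s1 s2 X P G = Order.max (Delta_sum G / Delta (DD T)) 0.
Proof.
move=> GP; rewrite /weight setDDl -DP_setU !Delta_setD_DP.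
by rewrite Delta_sum_setU 1?disjoint_sym //; congr (Order.max (_ / _) _); lra.
Qed.

Section Responsibility.
Variable eps : R.

Local Notation valid := (valid_contingency M s1 s2 X eps).
Local Notation weight := (weight M s1 s2 X).
Local Notation rho := (rho M s1 s2 X eps).

Lemma weight_ge0 P G : 0 <= weight P G.
Proof. by rewrite /Defs.weight le_max lexx orbT. Qed.

Lemma rho_eq0 P : ~~ actual_cause M s1 s2 X eps P -> rho P = 0.
Proof.
by move=> /existsPn noG; rewrite /Defs.rho; case: pickP => // G; rewrite (negbTE (noG G)).
Qed.

Lemma rho_min_weight P G : valid P G ->
  exists G0, [/\ valid P G0, forall G, valid P G -> weight P G0 <= weight P G
               & rho P = (1 + weight P G0)^-1].
Proof.
move=> PG; rewrite /Defs.rho; case: pickP => [G1 PG1|]; last by move/(_ G); rewrite PG.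
case: (arg_minP (weight P) PG1) => G0 PG0 minG0; exists G0; split=> //.
suff -> : \big[Order.min/weight P G1]_(G | valid P G) weight P G = weight P G0.
  by rewrite div1r.
by apply/eqP; rewrite eq_le bigmin_le_cond //= le_bigmin // minG0.
Qed.

Lemma rho_ge0 P : 0 <= rho P.
Proof.
case: (boolP (actual_cause M s1 s2 X eps P)) => [/existsP[G] | /rho_eq0 -> //].
by move=> /rho_min_weight[G0 [_ _ ->]]; rewrite invr_ge0 addr_ge0 ?weight_ge0.
Qed.

Lemma rho_le1 P : rho P <= 1.
Proof.
case: (boolP (actual_cause M s1 s2 X eps P)) => [/existsP[G] | /rho_eq0 -> //].
move=> /rho_min_weight[G0 [_ _ ->]].
by rewrite invf_le1 ?lerDl ?weight_ge0 // ltr_wpDr ?weight_ge0.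
Qed.

Lemma rho_le_of_contingency P Q :
  (forall G, valid P G -> exists2 G', valid Q G' & weight Q G' <= weight P G) ->
  rho P <= rho Q.
Proof.
move=> transfer.
case: (boolP (actual_cause M s1 s2 X eps P)) => [/existsP[G PG] | /rho_eq0 ->];
  last exact: rho_ge0.
have [G0 [PG0 _ ->]] := rho_min_weight PG.
have [G' QG' le_G'G0] := transfer G0 PG0.
have [G1 [_ minG1 ->]] := rho_min_weight QG'.
rewrite lef_pV2 ?posrE ?ltr_wpDr ?weight_ge0 // lerD2l.
exact: le_trans (minG1 _ QG') le_G'G0.
Qed.

Lemma rho_eq1 P :
  Delta (DD T) - Delta_sum P <= eps -> eps < Delta (DD T) -> rho P = 1.
Proof.
move=> le_eps lt_eps; have P0 : valid P set0.
  by rewrite valid_contingencyE -setI_eq0 set0I set0U Delta_sum_set0 subr0 eqxx le_eps lt_eps.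
have [G0 [_ minG0 ->]] := rho_min_weight P0.
have w0 : weight P set0 = 0.
  by rewrite weightE -?setI_eq0 ?set0I // Delta_sum_set0 mul0r maxxx.
suff -> : weight P G0 = 0 by rewrite addr0 invr1.
by apply/eqP; rewrite eq_le weight_ge0 -w0 minG0.
Qed.

Hypothesis Delta_D_gt0 : 0 < Delta (DD T).

Lemma valid_contingency_transfer (P G Q G' : {set 'I_m}) :
    valid P G -> [disjoint G' & Q] ->
    Delta_sum (G :|: P) <= Delta_sum (G' :|: Q) -> Delta_sum G' <= Delta_sum G ->
  valid Q G' /\ weight Q G' <= weight P G.
Proof.
rewrite !valid_contingencyE => /and3P[GP le_eps lt_eps] G'Q le_union le_G.
rewrite !weightE // le_max2 ?ler_pM2r ?invr_gt0 // G'Q /=.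
by split=> //; apply/andP; split; lra.
Qed.

Lemma rho_swap (P : {set 'I_m}) a b :
  a \notin P -> b \in P -> Delta_i b <= Delta_i a -> rho P <= rho (a |: (P :\ b)).
Proof.
move=> aP bP le_ba; apply: rho_le_of_contingency => G PG.
move: (PG); rewrite valid_contingencyE => /and3P[GP _ _].
have ab : (a == b) = false by apply: contraNF aP => /eqP ->.
have ba : (b == a) = false by rewrite eq_sym.
have bG : b \in G = false by rewrite (disjointFl GP bP).
(* If a is in G, let a and b trade places between G and P; otherwise keep G,
   and the union with the predicate only gains Delta_a - Delta_b >= 0. *)
have [aG | aG] := boolP (a \in G).
- pose G' := b |: (G :\ a).
  have disj : [disjoint G' & a |: (P :\ b)].
    rewrite -setI_eq0; apply/eqP/setP => x; rewrite !inE.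
    have := disjointFr GP (x := x).
    case: (x =P a) => [->|_]; last case: (x =P b) => [->|_];
      rewrite ?eqxx ?ab ?ba ?aG ?bG ?bP ?aP ?andbF //=.
    by case: (x \in G) => // ->.
  have union : G' :|: (a |: (P :\ b)) = G :|: P.
    apply/setP => x; rewrite !inE.
    case: (x =P a) => [->|_]; last case: (x =P b) => [->|_];
      rewrite ?eqxx ?ab ?ba ?aG ?bG ?bP ?aP ?orbT //=.
  have le_G' : Delta_sum G' <= Delta_sum G.
    by rewrite (Delta_sum_setD1 aG) Delta_sum_setU1 ?lerD2r // !inE bG andbF.
  have [] := valid_contingency_transfer PG disj _ le_G'; first by rewrite union.
  by exists G'.
- have disj : [disjoint G & a |: (P :\ b)].
    rewrite -setI_eq0; apply/eqP/setP => x; rewrite !inE.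
    have := disjointFr GP (x := x).
    case: (x =P a) => [->|_]; rewrite ?(negbTE aG) //=.
    by case: (x \in G) => // /(_ isT) ->; rewrite andbF.
  have union : G :|: (a |: (P :\ b)) = a |: ((G :|: P) :\ b).
    apply/setP => x; rewrite !inE.
    case: (x =P a) => [->|_]; last case: (x =P b) => [->|_];
      rewrite ?eqxx ?ab ?ba ?bG ?orbT //=.
  have le_union : Delta_sum (G :|: P) <= Delta_sum (G :|: (a |: (P :\ b))).
    rewrite union Delta_sum_setU1; last by rewrite !inE (negbTE aG) (negbTE aP) andbF.
    by rewrite (@Delta_sum_setD1 b (G :|: P)) ?lerD2r // inE bP orbT.
  have [] := valid_contingency_transfer PG disj le_union (lexx _).
  by exists G.
Qed.

End Responsibility.

Lemma Delta_sum_perm_prefix (ord : {perm 'I_m}) k :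
  \sum_(i < m | (i < k)%N) Delta_i (ord i) =
  Delta_sum [set ord i | i : 'I_m & (i < k)%N].
Proof.
rewrite /Delta_sum big_imset => [|i j _ _]; last exact: perm_inj.
by apply: eq_bigl => i; rewrite inE.
Qed.

Section CanonicalPredicate.
Variables (eps : R) (PC : {set 'I_m}).
Hypothesis PC_canonical : canonical_predicate M s1 s2 X eps PC.

Lemma canonical_predicate_sorted a b :
  a \in PC -> b \notin PC -> Delta_i b <= Delta_i a.
Proof.
case: PC_canonical => ord [j [sorted _ _ _ ->]] /imsetP[i]; rewrite inE => ij -> bPC.
rewrite -(permKV ord b) sorted // ltnW // (leq_trans ij) // leqNgt.
by apply: contra bPC => jb; apply/imsetP; exists (ord^-1%g b); rewrite ?inE ?permKV.
Qed.

Lemma canonical_predicate_le_eps : Delta (DD T) - Delta_sum PC <= eps.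
Proof. by case: PC_canonical => ord [j [_ _ + _ ->]]; rewrite Delta_sum_perm_prefix. Qed.

Lemma canonical_predicate_lt_Delta : eps < Delta (DD T).
Proof.
case: PC_canonical => ord [j [sorted /andP[j_gt0 j_le_m] le_eps lt_eps _]].
have last_lt_m : (j.-1 < m)%N by rewrite (ltn_predK j_gt0).
pose last := Ordinal last_lt_m.
have split_last : \sum_(i < m | (i < j)%N) Delta_i (ord i) =
    Delta_i (ord last) + \sum_(i < m | (i < j.-1)%N) Delta_i (ord i).
  rewrite (bigD1 last) /=; last by rewrite ltn_predL.
  congr (_ + _); apply: eq_bigl => i; rewrite -val_eqE /=.
  by rewrite -[in (i < j)%N](ltn_predK j_gt0) ltnS ltn_neqAle andbC.
have last_gt0 : 0 < Delta_i (ord last) by lra.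
suff : 0 <= \sum_(i < m | (i < j.-1)%N) Delta_i (ord i) by lra.
apply: sumr_ge0 => i i_lt; exact: le_trans (ltW last_gt0) (sorted i last (ltnW i_lt)).
Qed.

End CanonicalPredicate.

End WhyQuery.

Section Optimality.
Variables (R : realFieldType) (T : finType) (m : nat).
Variables (M : T -> R) (s1 s2 : {set T}) (X : T -> 'I_m).
Variables (eps sigma : R) (PC : {set 'I_m}).
Hypotheses (Delta_D_gt0 : 0 < Delta M s1 s2 (DD T)) (sigma_ge0 : 0 <= sigma).
Hypothesis PC_sorted : forall a b,
  a \in PC -> b \notin PC -> Delta_i M s1 s2 X b <= Delta_i M s1 s2 X a.
Hypothesis PC_le_eps : Delta M s1 s2 (DD T) - Delta_sum M s1 s2 X PC <= eps.
Hypothesis eps_lt_Delta : eps < Delta M s1 s2 (DD T).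

Local Notation objective := (objective M s1 s2 X eps sigma).
Local Notation rho := (rho M s1 s2 X eps).

Lemma objective_le P Q :
  rho P <= rho Q -> (#|Q| <= #|P|)%N -> objective P <= objective Q.
Proof. by move=> le_rho le_card; rewrite lerB // ler_wpM2l // ler_nat. Qed.

Lemma objective_dominated_in_canonical P :
  exists2 Q : {set 'I_m}, Q \subset PC & objective P <= objective Q.
Proof.
have [n] := ubnP #|P :\: PC|; elim: n P => // n IH P size_P.
have [P_PC | /subsetPn[b bP bPC]] := boolP (P \subset PC); first by exists P.
have [PC_P | /subsetPn[a aPC aP]] := boolP (PC \subset P).
  exists PC => //; apply: objective_le; last exact: subset_leq_card.
  by rewrite [rho PC]rho_eq1 ?rho_le1.
have [|Q Q_PC le_Q] := IH (a |: (P :\ b)).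
  rewrite -ltnS; apply: leq_trans size_P; rewrite ltnS; apply: proper_card.
  have -> : (a |: (P :\ b)) :\: PC = (P :\: PC) :\ b.
    apply/setP => x; rewrite !inE; case: (x =P a) => [->|_]; rewrite ?aPC ?andbF //=.
    by rewrite andbCA.
  by apply: properD1; rewrite inE bP bPC.
exists Q => //; apply: le_trans le_Q; apply: objective_le.
  exact: rho_swap (PC_sorted aPC bPC).
by rewrite cardsU1 !inE (negbTE aP) andbF (cardsD1 b P) bP.
Qed.

End Optimality.

Theorem proposition3p16 (R : realFieldType) (T : finType) (m : nat)
    (M : T -> R) (s1 s2 : {set T}) (X : T -> 'I_m)
    (eps sigma : R) (PC : {set 'I_m}) :
  [disjoint s1 & s2] ->
  0 < Delta M s1 s2 (DD T) ->
  0 < sigma ->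
  canonical_predicate M s1 s2 X eps PC ->
  exists Pstar : {set 'I_m},
    (forall P : {set 'I_m},
        objective M s1 s2 X eps sigma P <= objective M s1 s2 X eps sigma Pstar)
    /\ Pstar \subset PC.
Proof.
move=> _ Delta_D_gt0 sigma_gt0 PC_canonical.
have [P0 _ P0_max] := @arg_maxP _ _ _ set0 xpredT (objective M s1 s2 X eps sigma) isT.
have [Q Q_PC le_Q] := objective_dominated_in_canonical Delta_D_gt0 (ltW sigma_gt0)
  (canonical_predicate_sorted PC_canonical) (canonical_predicate_le_eps PC_canonical)
  (canonical_predicate_lt_Delta PC_canonical) P0.
by exists Q; split=> // P; apply: le_trans (P0_max P isT) le_Q.
Qed.
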